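(* Let $V$ be a finite set, let $d\ge 1$, let $R=(\le_1,\ldots,\le_d)$ be a $d$-representation on $V$, let $R'=(\le_1,\ldots,\le_{d-1})$, and let $\psi:\Sigma(R)\setminus\Sigma(R')\to V$ be defined by $\psi(F)=\min_{\le_d}\{x\in V : x<_i\max_{\le_i}F \ \forall i\in\{1,\ldots,d-1\}\}$. Let $A=\{F\in\Sigma(R)\setminus\Sigma(R') : \psi(F)\notin F\}$ and $B=\{F\in\Sigma(R)\setminus\Sigma(R') : \psi(F)\in F\}$. Then: (1) for every $F\in A$: $F\cup\{\psi(F)\}\in B$, $\psi(F\cup\{\psi(F)\})=\psi(F)$, and $f<_d\psi(F)$ for every $f\in F$ (i.e. $\max_{\le_d}F<_d\psi(F)$ when $F\neq\emptyset$); (2) for every $F\in B$: $F\setminus\{\psi(F)\}\in A$ and $\psi(F\setminus\{\psi(F)\})=\psi(F)$.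
   Context: A $k$-representation on $V$ is a family of $k$ linear orders on $V$. For a linear order $\le$ on $V$, $x\in V$ and $F\subseteq V$, $x$ dominates $F$ in $\le$ if $f\le x$ for all $f\in F$; $x$ dominates $F$ in a representation if it dominates $F$ in at least one of its orders. For a representation $S$ on $V$, the supremum section $\Sigma(S)$ is the set of subsets $F\subseteq V$ such that every $v\in V$ dominates $F$ in $S$. When $d=1$, $R'$ has no orders and the same definition applies. The set over which the minimum defining $\psi$ is taken is nonempty for every $F\in\Sigma(R)\setminus\Sigma(R')$. $<_i$ denotes the strict order associated with $\le_i$. *)

From mathcomp Require Import all_boot all_order.
Set Implicit Arguments. Unset Strict Implicit. Unset Printing Implicit Defensive.

Section Defs.
Variable T : finType.

(* A linear order on T given as a boolean relation r (r x y means x <= y). *)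
Definition linear_order (r : rel T) : Prop :=
  [/\ reflexive r, antisymmetric r, transitive r & total r].

Definition strict (r : rel T) : rel T := fun x y => r x y && (x != y).

Definition dominates_in (r : rel T) (x : T) (F : {set T}) : bool :=
  [forall f in F, r f x].

(* A k-representation is a family R : 'I_k -> rel T of linear orders;
   x dominates F in R if it dominates F in at least one order. *)
Definition dominates {k : nat} (R : 'I_k -> rel T) (x : T) (F : {set T}) : bool :=
  [exists i : 'I_k, dominates_in (R i) x F].

Definition Sigma {k : nat} (R : 'I_k -> rel T) : {set {set T}} :=
  [set F : {set T} | [forall v : T, dominates R v F]].

(* The maximum of F in r (None if F has no maximum, e.g. F empty). *)
Definition maxo (r : rel T) (F : {set T}) : option T :=
  [pick m in F | dominates_in r m F].

Definition mino (r : rel T) (S : {set T}) : option T :=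
  [pick m in S | [forall s in S, r m s]].

Definition lt_max (r : rel T) (x : T) (F : {set T}) : bool :=
  if maxo r F is Some m then strict r x m else false.

(* R' = (<=_1, ..., <=_{d-1}) for R = (<=_1, ..., <=_d), d = k.+1. *)
Definition Rprime {k : nat} (R : 'I_k.+1 -> rel T) : 'I_k -> rel T :=
  fun i => R (widen_ord (leqnSn k) i).

Definition psi {k : nat} (R : 'I_k.+1 -> rel T) (F : {set T}) : option T :=
  mino (R ord_max) [set x | [forall i : 'I_k, lt_max (Rprime R i) x F]].

Definition setA {k : nat} (R : 'I_k.+1 -> rel T) : {set {set T}} :=
  [set F | [&& F \in Sigma R, F \notin Sigma (Rprime R) &
             (if psi R F is Some p then p \notin F else false)]].

Definition setB {k : nat} (R : 'I_k.+1 -> rel T) : {set {set T}} :=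
  [set F | [&& F \in Sigma R, F \notin Sigma (Rprime R) &
             (if psi R F is Some p then p \in F else false)]].
End Defs.

From mathcomp Require Import all_boot all_order.
Set Implicit Arguments. Unset Strict Implicit. Unset Printing Implicit Defensive.

(* For a linear order, [x <_i max_i F] just says that [x] does not dominate
   [F] in [<=_i]; so [psi F] is the [<=_d]-least element of the set [N F] of
   points dominating [F] in none of the first [d - 1] orders, and [N F] is
   nonempty exactly when [F] is not in [Sigma R'].  An element [x] of [N F]
   lies strictly below some element of [F] in each of these orders, so adding
   [x] to [F] or removing it does not change [N F], hence neither [psi F].
   If [F] is in [Sigma R], so is [psi F |: F]: a point dominating [F] only in
   [<=_d] belongs to [N F], hence lies [<=_d]-above [psi F]. *)

Section LinearOrder.
Variables (T : finType) (r : rel T).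

Lemma dominates_in_setU1 x v (F : {set T}) :
  dominates_in r v (x |: F) = r x v && dominates_in r v F.
Proof.
apply/forall_inP/andP => [vdom | [rxv /forall_inP vdom] f].
  split; first exact/vdom/setU11.
  by apply/forall_inP => f fF; apply/vdom/setU1r.
by rewrite in_setU1 => /orP[/eqP->|]; last exact: vdom.
Qed.

Lemma mino_Some (S : {set T}) p :
  mino r S = Some p -> p \in S /\ forall s, s \in S -> r p s.
Proof. by rewrite /mino; case: pickP => // m /andP[mS /forall_inP mmin] [<-]. Qed.

Hypothesis r_linear : linear_order r.

(* The maximum is found as an element of [F] with the largest down-set. *)
Lemma maxo_None (F : {set T}) : maxo r F = None -> F = set0.
Proof.
case: r_linear => refl _ tr tot.
rewrite /maxo; case: pickP => // noMax _; apply/setP => f; rewrite inE.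
apply/negP => fF; pose rank y := #|[set z | r z y]|.
have [m mF mmax] := @arg_maxnP _ f (fun y => y \in F) rank fF.
move: (noMax m); rewrite mF /= => /negP; apply; apply/forall_inP => g gF.
case rgm: (r g m) => //; have rmg : r m g by move: (tot g m); rewrite rgm.
have lt_rank : rank m < rank g.
  apply/proper_card/properP; split; last by exists g; rewrite !inE ?refl ?rgm.
  by apply/subsetP => z; rewrite !inE => rzm; apply: tr rzm rmg.
by have := mmax g gF; rewrite /= leqNgt lt_rank.
Qed.

Lemma lt_maxE x (F : {set T}) : lt_max r x F = ~~ dominates_in r x F.
Proof.
rewrite /lt_max; case Hm: (maxo r F) => [m|]; last first.
  by rewrite (maxo_None Hm); apply/esym/negbF/forall_inP => f; rewrite inE.
move: Hm; rewrite /maxo; case: pickP => // m0 /andP[mF /forall_inP mdom] [<-].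
case: r_linear => _ anti tr tot.
apply/idP/idP => [/andP[rxm xm]|].
  by apply: contra xm => /forall_inP xdom; apply/eqP/anti; rewrite rxm xdom.
rewrite negb_forall_in => /exists_inP[f fF rfx].
have rxf : r x f by move: (tot f x); rewrite (negbTE rfx).
rewrite /strict (tr _ _ _ rxf (mdom f fF)) /=.
by apply: contraNneq rfx => ->; apply: mdom.
Qed.

End LinearOrder.

Definition nondominators (T : finType) (k : nat) (Q : 'I_k -> rel T)
    (F : {set T}) : {set T} :=
  [set x | ~~ dominates Q x F].

Section Representation.
Variables (T : finType) (k : nat) (Q : 'I_k -> rel T).

Lemma dominates_subset v (F G : {set T}) :
  G \subset F -> dominates Q v F -> dominates Q v G.
Proof.
move=> /subsetP GF /existsP[i /forall_inP vdom]; apply/existsP; exists i.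
by apply/forall_inP => g /GF; apply: vdom.
Qed.

Lemma Sigma_subset (F G : {set T}) :
  G \subset F -> F \in Sigma Q -> G \in Sigma Q.
Proof.
move=> GF; rewrite !inE => /forallP Fdom.
by apply/forallP => v; apply: dominates_subset GF _.
Qed.

Lemma nondominator_notin_Sigma x (F : {set T}) :
  x \in nondominators Q F -> F \notin Sigma Q.
Proof. by rewrite !inE; apply: contra => /forallP. Qed.

Hypothesis Q_linear : forall i, linear_order (Q i).

Lemma nondominatorsE (F : {set T}) :
  [set x | [forall i, lt_max (Q i) x F]] = nondominators Q F.
Proof.
by apply/setP => x; rewrite !inE negb_exists; apply: eq_forallb => i; rewrite lt_maxE.
Qed.

(* [x] lies below some element of [F] in every order, hence below every
   point dominating [F]. *)
Lemma dominates_setU1 x v (F : {set T}) : x \in nondominators Q F ->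
  dominates Q v (x |: F) = dominates Q v F.
Proof.
rewrite inE negb_exists => /forallP xN; apply/idP/idP.
  by apply: dominates_subset; apply: subsetUr.
case/existsP=> i vdom; apply/existsP; exists i; rewrite dominates_in_setU1 vdom andbT.
case: (Q_linear i) => _ _ tr tot.
move: (xN i); rewrite negb_forall_in => /exists_inP[f fF rfx].
have rxf : Q i x f by move: (tot f x); rewrite (negbTE rfx).
exact: tr rxf (forall_inP vdom f fF).
Qed.

Lemma nondominators_setU1 x (F : {set T}) : x \in nondominators Q F ->
  nondominators Q (x |: F) = nondominators Q F.
Proof. by move=> xN; apply/setP => v; rewrite !inE dominates_setU1. Qed.

Lemma nondominators_setD1 x (F : {set T}) : x \in nondominators Q F ->
  nondominators Q (F :\ x) = nondominators Q F.
Proof.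
move=> xN; have F_sub : F \subset x |: (F :\ x).
  by apply/subsetP => y yF; rewrite in_setU1 in_setD1 yF andbT; case: eqP.
have xND : x \in nondominators Q (F :\ x).
  move: xN; rewrite !inE; apply: contra => /existsP[i xdom].
  apply: dominates_subset F_sub _.
  apply/existsP; exists i; rewrite dominates_in_setU1 xdom andbT.
  by case: (Q_linear i).
apply/setP => v; rewrite !inE; congr negb; apply/idP/idP.
  by rewrite -(dominates_setU1 v xND); apply: dominates_subset.
by apply: dominates_subset; apply: subD1set.
Qed.

End Representation.

Section LastOrder.
Variables (T : finType) (k : nat) (R : 'I_k.+1 -> rel T).

Lemma dominates_ord_max v (F : {set T}) :
  dominates R v F = dominates_in (R ord_max) v F || dominates (Rprime R) v F.
Proof.
apply/existsP/orP => [[i vdom]|[vdom|/existsP[j vdom]]]; last 2 first.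
- by exists ord_max.
- by exists (widen_ord (leqnSn k) j).
case: (unliftP ord_max i) vdom => [j ->|-> vdom]; last by left.
have -> : lift ord_max j = widen_ord (leqnSn k) j by apply: val_inj; apply: lift_max.
by right; apply/existsP; exists j.
Qed.

Hypothesis R_linear : forall i, linear_order (R i).

Let Rprime_linear i : linear_order (Rprime R i). Proof. exact: R_linear. Qed.

Lemma psiE (F : {set T}) :
  psi R F = mino (R ord_max) (nondominators (Rprime R) F).
Proof. by rewrite /psi (nondominatorsE Rprime_linear). Qed.

Lemma psi_Some (F : {set T}) p : psi R F = Some p ->
  p \in nondominators (Rprime R) F /\
  forall s, s \in nondominators (Rprime R) F -> R ord_max p s.
Proof. by rewrite psiE => /mino_Some. Qed.

Lemma psi_setU1 (F : {set T}) p : psi R F = Some p -> psi R (p |: F) = Some p.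
Proof.
move=> Hp; have [pN _] := psi_Some Hp.
by rewrite psiE (nondominators_setU1 Rprime_linear pN) -psiE.
Qed.

Lemma psi_setD1 (F : {set T}) p : psi R F = Some p -> psi R (F :\ p) = Some p.
Proof.
move=> Hp; have [pN _] := psi_Some Hp.
by rewrite psiE (nondominators_setD1 Rprime_linear pN) -psiE.
Qed.

Lemma setA_Some (F : {set T}) p : psi R F = Some p ->
  (F \in setA R) = (F \in Sigma R) && (p \notin F).
Proof.
move=> Hp; have [pN _] := psi_Some Hp.
by rewrite inE Hp (nondominator_notin_Sigma pN).
Qed.

Lemma setB_Some (F : {set T}) p : psi R F = Some p ->
  (F \in setB R) = (F \in Sigma R) && (p \in F).
Proof.
move=> Hp; have [pN _] := psi_Some Hp.
by rewrite inE Hp (nondominator_notin_Sigma pN).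
Qed.

Lemma psi_dominates (F : {set T}) p : F \in Sigma R -> psi R F = Some p ->
  dominates_in (R ord_max) p F.
Proof.
rewrite inE => /forallP/(_ p); rewrite dominates_ord_max => pdom Hp.
have [pN _] := psi_Some Hp; move: pN pdom; rewrite inE => /negbTE->.
by rewrite orbF.
Qed.

Lemma Sigma_setU1_psi (F : {set T}) p : F \in Sigma R -> psi R F = Some p ->
  p |: F \in Sigma R.
Proof.
rewrite !inE => /forallP Fdom Hp; have [pN pmin] := psi_Some Hp.
apply/forallP => v; rewrite dominates_ord_max (dominates_setU1 Rprime_linear v pN).
have [_|vN] := boolP (dominates (Rprime R) v F); first by rewrite orbT.
move: (Fdom v); rewrite dominates_ord_max (negbTE vN) !orbF => vdom.
by rewrite dominates_in_setU1 vdom pmin ?inE.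
Qed.

End LastOrder.

Theorem lemma3 (T : finType) (k : nat) (R : 'I_k.+1 -> rel T)
  (HR : forall i, linear_order (R i)) :
  (forall F : {set T}, F \in setA R ->
     exists p, [/\ psi R F = Some p, (p |: F) \in setB R,
                   psi R (p |: F) = Some p &
                   forall f, f \in F -> strict (R ord_max) f p])
  /\
  (forall F : {set T}, F \in setB R ->
     exists p, [/\ psi R F = Some p, (F :\ p) \in setA R &
                   psi R (F :\ p) = Some p]).
Proof.
split=> F; (case Hp: (psi R F) => [p|]; last by rewrite inE Hp !andbF).
- rewrite (setA_Some HR Hp) => /andP[FS pF].
  have HpU := psi_setU1 HR Hp.
  exists p; split=> //.
    by rewrite (setB_Some HR HpU) setU11 andbT Sigma_setU1_psi.
  move=> f fF; rewrite /strict (forall_inP (psi_dominates HR FS Hp)) //=.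
  by apply: contraNneq pF => <-.
- rewrite (setB_Some HR Hp) => /andP[FS pF].
  have HpD := psi_setD1 HR Hp.
  exists p; split=> //.
  by rewrite (setA_Some HR HpD) setD11 andbT (Sigma_subset (subD1set F p)).
Qed.
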